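(* Let $(S_j)_{j\ge1}$ be a $\boldsymbol\mu$-geometrically Cauchy sequence in $\mathbb T$. Then there is $S\in\mathbb T$ such that $S_j$ converges $\boldsymbol\mu$-geometrically to $S$.
   Context: $\mathbb T$ is the field of real grid-based transseries over the ordered group $\mathfrak G$ of transmonomials; $\operatorname{mag}T$ is the dominant monomial of $T\ne0$. A ratio set is a finite $\boldsymbol\mu\subset\{\mathfrak g\prec1\}$; $\boldsymbol\mu^*$ (resp. $\boldsymbol\mu^+$) is the set of products of zero or more (resp. one or more) elements of $\boldsymbol\mu$. Monomials: $\mathfrak m\prec^{\boldsymbol\mu}\mathfrak n$ iff $\mathfrak m/\mathfrak n\in\boldsymbol\mu^+$; transseries: $A\prec^{\boldsymbol\mu}B$ (written also $B\succ^{\boldsymbol\mu}A$) iff each $\mathfrak a\in\operatorname{supp}A$ is $\prec^{\boldsymbol\mu}$ some $\mathfrak b\in\operatorname{supp}B$. $\boldsymbol\mu$ witnesses nonzero $T$ iff $\operatorname{supp}T\subseteq(\operatorname{mag}T)\boldsymbol\mu^*$. A sequence $(S_j)$ is $\boldsymbol\mu$-geometrically Cauchy if for all $j$, $\boldsymbol\mu$ witnesses $S_{j+1}-S_j$ and (for $j\ge2$) $S_j-S_{j-1}\succ^{\boldsymbol\mu}S_{j+1}-S_j$; equivalently the series $\sum_{j\ge1}(S_{j+1}-S_j)$ is $\boldsymbol\mu$-geometrically convergent, where $\sum A_j$ is $\boldsymbol\mu$-geometrically convergent if $\boldsymbol\mu$ witnesses each $A_j$ and $A_j\succ^{\boldsymbol\mu}A_{j+1}$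 for all $j$. $S_j$ converges $\boldsymbol\mu$-geometrically to $S$ if for all $j$, $\boldsymbol\mu$ witnesses $S-S_j$ and $S-S_j\succ^{\boldsymbol\mu}S-S_{j+1}$. *)

From HB Require Import structures.
From mathcomp Require Import all_boot all_order all_algebra.
From mathcomp Require Import all_classical all_reals.
Set Implicit Arguments. Unset Strict Implicit. Unset Printing Implicit Defensive.
Import Order.TTheory GRing.Theory Num.Theory.
Local Open Scope ring_scope.

(* The monomial group 𝔊 is written ADDITIVELY: G : porderZmodType, where
   the order "<" on G is the asymptotic dominance order "≺" on monomials,
   the group operation "+" is the monomial product, and 0 is the monomial 1.
   We require the order to be total and translation invariant, i.e. G is an
   ordered abelian group (as the group of transmonomials is). *)
Definition ordered_abelian_group (G : porderZmodType) : Prop :=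
  (forall x y : G, (x <= y) || (y <= x)) /\
  (forall x y z : G, x <= y -> x + z <= y + z).

Definition series (G : porderZmodType) (R : realType) := G -> R.

Definition sub_series G R (A B : series G R) : series G R := fun g => A g - B g.

Definition mstar (G : porderZmodType) (mu : seq G) (g : G) : Prop :=
  exists c : 'I_(size mu) -> nat,
    g = \sum_(i < size mu) (nth 0 mu i) *+ c i.

Definition mplus (G : porderZmodType) (mu : seq G) (g : G) : Prop :=
  exists c : 'I_(size mu) -> nat,
    (0 < \sum_(i < size mu) c i)%N /\
    g = \sum_(i < size mu) (nth 0 mu i) *+ c i.

Definition ratio_set (G : porderZmodType) (mu : seq G) : Prop :=
  forall g, g \in mu -> g < 0.

Definition grid_based (G : porderZmodType) (R : realType) (A : series G R) : Prop :=
  exists (m : G) (mu : seq G), ratio_set mu /\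
    forall g, A g != 0 -> exists h, mstar mu h /\ g = m + h.

Definition is_mag (G : porderZmodType) (R : realType) (A : series G R) (m : G) : Prop :=
  A m != 0 /\ forall g, A g != 0 -> g <= m.

Definition witnesses (G : porderZmodType) (R : realType) (mu : seq G) (A : series G R) : Prop :=
  (exists g, A g != 0) /\
  exists m, is_mag A m /\ forall g, A g != 0 -> exists h, mstar mu h /\ g = m + h.

Definition mprec (G : porderZmodType) (mu : seq G) (m n : G) : Prop :=
  exists h, mplus mu h /\ m = n + h.

Definition sprec (G : porderZmodType) (R : realType) (mu : seq G) (A B : series G R) : Prop :=
  forall a, A a != 0 -> exists b, B b != 0 /\ mprec mu a b.

Definition geom_cauchy (G : porderZmodType) (R : realType) (mu : seq G)
  (S : nat -> series G R) : Prop :=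
  forall j, (1 <= j)%N ->
    witnesses mu (sub_series (S j.+1) (S j)) /\
    ((2 <= j)%N -> sprec mu (sub_series (S j.+1) (S j)) (sub_series (S j) (S j.-1))).

Definition geom_converges (G : porderZmodType) (R : realType) (mu : seq G)
  (S : nat -> series G R) (L : series G R) : Prop :=
  forall j, (1 <= j)%N ->
    witnesses mu (sub_series L (S j)) /\
    sprec mu (sub_series L (S j.+1)) (sub_series L (S j)).

From mathcomp Require Import all_boot all_order all_algebra.
From mathcomp Require Import all_classical all_reals.
Import Order.TTheory GRing.Theory Num.Theory.
Set Implicit Arguments. Unset Strict Implicit. Unset Printing Implicit Defensive.
Local Open Scope ring_scope.

(* Write D_j := S_(j+1) - S_j.  Chaining the relations D_k ≺^μ D_(k-1) down
   to D_j shows that every monomial in the support of a later difference D_k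
   (k > j) is ≺^μ mag D_j.  Coefficientwise, the limit L takes the eventual
   value of S_k at every monomial at which the sequence settles.  If
   (L - S_j) g <> 0 then D_k g <> 0 for some k >= j, so supp (L - S_j) lies in
   (mag D_j) μ^*, and L - S_j agrees with D_j at mag D_j since no later
   difference reaches that monomial.  Hence mag (L - S_j) = mag D_j, which
   gives both the witnessing and the ≺^μ-decrease of the tails. *)

Section OrderedGroup.
Variable G : porderZmodType.
Hypothesis HG : ordered_abelian_group G.
Implicit Types x y z : G.

Lemma oag_lerD2r x y z : x <= y -> x + z <= y + z.
Proof. by case: HG => _; apply. Qed.

Lemma oag_ler_nDl x y : x <= 0 -> x + y <= y.
Proof. by move=> /(oag_lerD2r y); rewrite add0r. Qed.

Lemma oag_ltr_nDl x y : x < 0 -> x + y < y.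
Proof.
move=> x_lt0; rewrite lt_neqAle oag_ler_nDl ?ltW // andbT.
by rewrite -subr_eq0 addrK lt_eqF.
Qed.

Lemma oag_addr_le0 x y : x <= 0 -> y <= 0 -> x + y <= 0.
Proof. by move=> /(oag_ler_nDl y) /le_trans; apply. Qed.

Lemma oag_addr_lt0 x y : x < 0 -> y <= 0 -> x + y < 0.
Proof. by move=> /(oag_ltr_nDl y) /lt_le_trans; apply. Qed.

Lemma oag_mulrn_le0 x n : x <= 0 -> x *+ n <= 0.
Proof. by move=> x_le0; elim: n => [|n IHn]; rewrite ?mulr0n // mulrS oag_addr_le0. Qed.

End OrderedGroup.

Section Monoid.
Variable G : porderZmodType.
Implicit Types (mu nu : seq G) (x y : G).

Lemma mstar0 mu : mstar mu 0.
Proof. by exists (fun=> 0%N); rewrite big1 // => i _; rewrite mulr0n. Qed.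

Lemma sum_mulrnD mu (c1 c2 : 'I_(size mu) -> nat) :
  \sum_(i < size mu) nth 0 mu i *+ (c1 i + c2 i) =
  \sum_(i < size mu) nth 0 mu i *+ c1 i + \sum_(i < size mu) nth 0 mu i *+ c2 i.
Proof. by rewrite -big_split; apply: eq_bigr => i _; rewrite mulrnDr. Qed.

Lemma mstarD mu x y : mstar mu x -> mstar mu y -> mstar mu (x + y).
Proof. by move=> [c1 ->] [c2 ->]; exists (fun i => c1 i + c2 i)%N; rewrite sum_mulrnD. Qed.

Lemma mstarMn mu x n : mstar mu x -> mstar mu (x *+ n).
Proof.
by move=> mux; elim: n => [|n IHn]; rewrite ?mulr0n ?mulrS; [exact: mstar0 | apply: mstarD].
Qed.

Lemma mem_mstar mu x : x \in mu -> mstar mu x.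
Proof.
move=> mu_x; pose i0 := Ordinal (etrans (index_mem x mu) mu_x).
exists (fun i => nat_of_bool (i == i0)).
rewrite (bigD1 i0) //= eqxx mulr1n big1 ?addr0 ?nth_index // => i /negbTE ->.
by rewrite mulr0n.
Qed.

Lemma mstar_sub mu nu x : {subset mu <= nu} -> mstar mu x -> mstar nu x.
Proof.
move=> mu_nu [c ->]; apply: (big_ind (mstar nu)) => [||i _].
- exact: mstar0.
- exact: mstarD.
by apply/mstarMn/mem_mstar/mu_nu/mem_nth.
Qed.

Lemma mplus_mstar mu x : mplus mu x -> mstar mu x.
Proof. by move=> [c [_ ->]]; exists c. Qed.

Lemma mstar_mplusD mu x y : mstar mu x -> mplus mu y -> mplus mu (x + y).
Proof.
move=> [c1 ->] [c2 [c2_gt0 ->]]; exists (fun i => c1 i + c2 i)%N.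
by rewrite sum_mulrnD big_split /= (leq_trans c2_gt0) ?leq_addl.
Qed.

End Monoid.

Section RatioSet.
Variables (G : porderZmodType) (mu : seq G).
Hypothesis HG : ordered_abelian_group G.
Hypothesis Hmu : ratio_set mu.

Lemma ratio_sum_le0 (P : pred 'I_(size mu)) (c : 'I_(size mu) -> nat) :
  \sum_(i < size mu | P i) nth 0 mu i *+ c i <= 0.
Proof.
apply: (big_ind (fun x : G => x <= 0)) => [//||i _]; first exact: oag_addr_le0.
by apply/(oag_mulrn_le0 HG)/ltW/Hmu/mem_nth.
Qed.

Lemma mstar_le0 x : mstar mu x -> x <= 0.
Proof. by move=> [c ->]; apply: ratio_sum_le0. Qed.

Lemma mplus_lt0 x : mplus mu x -> x < 0.
Proof.
move=> [c [c_gt0 ->]].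
have [i0 ci0_gt0] : exists i, (0 < c i)%N.
  apply: contrapT => /forallNP c0; move: c_gt0; rewrite big1 // => i _.
  by apply/eqP; rewrite -leqn0 leqNgt; apply/negP/c0.
have mu_i0 : nth 0 mu i0 < 0 by apply/Hmu/mem_nth.
rewrite (bigD1 i0) //= -(prednK ci0_gt0) mulrS.
by rewrite -addrA oag_addr_lt0 // oag_addr_le0 ?ratio_sum_le0 ?oag_mulrn_le0 ?ltW.
Qed.

Lemma mprec_lt x y : mprec mu x y -> x < y.
Proof. by move=> [h [/mplus_lt0 h_lt0 ->]]; rewrite addrC oag_ltr_nDl. Qed.

End RatioSet.

Section GridBased.
Variables (G : porderZmodType) (R : realType).
Hypothesis HG : ordered_abelian_group G.

Definition supp_grid (mu : seq G) (m : G) (A : series G R) : Prop :=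
  forall g, A g != 0 -> exists h, mstar mu h /\ g = m + h.

Lemma supp_grid_le mu m (A : series G R) g :
  ratio_set mu -> supp_grid mu m A -> A g != 0 -> g <= m.
Proof.
move=> Hmu Am /Am [h [/(mstar_le0 HG Hmu) h_le0 ->]].
by rewrite addrC oag_ler_nDl.
Qed.

(* Two grids a ν^* and b μ^* with a <= b lie in the single grid b λ^*, where
   λ collects the negative elements of ν, μ and a - b. *)
Lemma grid_based_of_cover (A : series G R) (a b : G) (nu mu : seq G) :
  ratio_set nu -> ratio_set mu ->
  (forall g, A g != 0 ->
     (exists h, mstar nu h /\ g = a + h) \/ (exists h, mstar mu h /\ g = b + h)) ->
  grid_based A.
Proof.
wlog a_le_b : a b nu mu / a <= b => [wlog_ab|] nu_ratio mu_ratio A_cover.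
  case/orP: (HG.1 a b) => [ab|ba]; first exact: (wlog_ab a b nu mu).
  by apply: (wlog_ab b a mu nu) => // g /A_cover []; [right | left].
pose lam := [seq x <- a - b :: nu ++ mu | x < 0].
have nu_lam : {subset nu <= lam}.
  by move=> x nu_x; rewrite mem_filter nu_ratio //= inE mem_cat nu_x orbT.
have mu_lam : {subset mu <= lam}.
  by move=> x mu_x; rewrite mem_filter mu_ratio //= inE mem_cat mu_x !orbT.
have lam_ab : mstar lam (a - b).
  have : a - b <= 0 by rewrite -(subrr b) oag_lerD2r.
  rewrite le_eqVlt => /orP[/eqP -> | ab_lt0]; first exact: mstar0.
  by apply: mem_mstar; rewrite mem_filter ab_lt0 inE eqxx.
exists b, lam; split=> [x|g /A_cover [] [h [hh ->]]]; first by rewrite mem_filter => /andP[].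
  exists (a - b + h); split; first exact: mstarD lam_ab (mstar_sub nu_lam hh).
  by rewrite addrA addrCA subrr addr0.
by exists h; split; first exact: mstar_sub mu_lam hh.
Qed.

End GridBased.

Section Limit.
Variables (G : porderZmodType) (R : realType) (S : nat -> series G R).

Definition settles (g : G) (N : nat) : Prop := forall k, (N <= k)%N -> S k.+1 g = S k g.

(* At a monomial where S never settles, [xget] falls back to index 0 and the
   value is junk; no lemma below depends on it. *)
Definition geom_limit : series G R := fun g => S (xget 0%N (settles g)) g.

Lemma settles_const g N k : settles g N -> (N <= k)%N -> S k g = S N g.
Proof.
move=> SgN; elim: k => [|k IHk]; first by rewrite leqn0 => /eqP ->.
by rewrite leq_eqVlt => /orP[/eqP -> // | /[dup] /IHk <- /SgN].
Qed.

Lemma geom_limit_settled g N : settles g N -> geom_limit g = S N g.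
Proof.
move=> SgN; have := xgetPex 0%N (ex_intro _ N SgN); set M := xget _ _ => SgM.
by rewrite /geom_limit -/M -(settles_const SgM (leq_maxl M N)) (settles_const SgN (leq_maxr M N)).
Qed.

Lemma geom_limit_sub_neq0 g j :
  sub_series geom_limit (S j) g != 0 ->
  exists2 k, (j <= k)%N & sub_series (S k.+1) (S k) g != 0.
Proof.
apply: contraNP => no_later; rewrite /sub_series (geom_limit_settled (N := j)) ?subrr //.
move=> k jk; apply/eqP; rewrite -subr_eq0; apply/negPn/negP => Dkg.
by apply: no_later; exists k.
Qed.

End Limit.

Section GeomCauchy.
Variables (G : porderZmodType) (R : realType) (mu : seq G) (S : nat -> series G R).
Hypothesis HG : ordered_abelian_group G.
Hypothesis Hmu : ratio_set mu.
Hypothesis Hc : geom_cauchy mu S.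

Local Notation D k := (sub_series (S k.+1) (S k)).
Local Notation L := (geom_limit S).

Lemma geom_cauchy_mprec j m : (1 <= j)%N -> supp_grid mu m (D j) ->
  forall k, (j < k)%N -> forall a, D k a != 0 -> mprec mu a m.
Proof.
move=> j_ge1 Djm; elim=> [//|k IHk] jk a Dka.
have Sk_ge2 : (2 <= k.+1)%N by rewrite ltnS (leq_trans j_ge1).
have [b [Dkb [h [hh ->]]]] := (Hc (ltnW Sk_ge2)).2 Sk_ge2 a Dka.
have [h' [mu_h' ->]] : exists h', mstar mu h' /\ b = m + h'.
  move: jk; rewrite ltnS leq_eqVlt => /orP[/eqP jk | /IHk/(_ b Dkb)].
    by rewrite jk in Djm; apply: Djm.
  by move=> [h' [/mplus_mstar mu_h' ->]]; exists h'.
by exists (h' + h); split; [exact: mstar_mplusD | rewrite addrA].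
Qed.

Lemma geom_limit_supp_grid j m : (1 <= j)%N -> supp_grid mu m (D j) ->
  supp_grid mu m (sub_series L (S j)).
Proof.
move=> j_ge1 Djm g /geom_limit_sub_neq0 [k]; rewrite leq_eqVlt => /orP[/eqP <- | jk Dkg].
  exact: Djm.
by have [h [/mplus_mstar mu_h ->]] := geom_cauchy_mprec j_ge1 Djm jk Dkg; exists h.
Qed.

Lemma geom_limit_grid_based : grid_based (S 1%N) -> grid_based L.
Proof.
move=> [m [nu [nu_ratio S1m]]].
have [[_ [m1 [_ D1m1]]] _] := Hc (isT : (1 <= 1)%N).
apply: (grid_based_of_cover HG (a := m) (b := m1) nu_ratio Hmu) => g Lg.
have [S1g0|S1g] := eqVneq (S 1%N g) 0; last by left; apply: S1m.
by right; apply: (geom_limit_supp_grid _ D1m1) => //; rewrite /sub_series S1g0 subr0.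
Qed.

Lemma geom_limit_sub_mag j m : (1 <= j)%N -> supp_grid mu m (D j) ->
  sub_series L (S j) m = D j m.
Proof.
move=> j_ge1 Djm; rewrite /sub_series (geom_limit_settled (N := j.+1)) // => k jk.
apply/eqP; rewrite -subr_eq0; apply/negPn/negP => Dkm.
by have := mprec_lt HG Hmu (geom_cauchy_mprec j_ge1 Djm jk Dkm); rewrite ltxx.
Qed.

Lemma geom_limit_is_mag j m : (1 <= j)%N -> is_mag (D j) m -> supp_grid mu m (D j) ->
  is_mag (sub_series L (S j)) m.
Proof.
move=> j_ge1 [Djm_neq0 _] Djm; split; first by rewrite geom_limit_sub_mag.
by move=> g; apply: (supp_grid_le HG Hmu); apply: geom_limit_supp_grid.
Qed.

Lemma geom_limit_witnesses j : (1 <= j)%N -> witnesses mu (sub_series L (S j)).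
Proof.
move=> j_ge1; have [_ [m [mag_m Djm]]] := (Hc j_ge1).1.
have mag_Lm := geom_limit_is_mag j_ge1 mag_m Djm.
split; first by exists m; case: mag_Lm.
by exists m; split; last exact: geom_limit_supp_grid.
Qed.

Lemma geom_limit_sprec j : (1 <= j)%N ->
  sprec mu (sub_series L (S j.+1)) (sub_series L (S j)).
Proof.
move=> j_ge1; have [_ [m [mag_m Djm]]] := (Hc j_ge1).1.
move=> a /geom_limit_sub_neq0 [k jk Dka]; exists m; split.
  by case: (geom_limit_is_mag j_ge1 mag_m Djm).
exact: geom_cauchy_mprec j_ge1 Djm k jk a Dka.
Qed.

End GeomCauchy.

Theorem proposition3p19 (G : porderZmodType) (R : realType)
  (HG : ordered_abelian_group G)
  (mu : seq G) (Hmu : ratio_set mu)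
  (S : nat -> series G R)
  (HS : forall j, (1 <= j)%N -> grid_based (S j))
  (Hc : geom_cauchy mu S) :
  exists L : series G R, grid_based L /\ geom_converges mu S L.
Proof.
exists (geom_limit S); split; first exact: geom_limit_grid_based HG Hmu Hc (HS 1%N isT).
by move=> j j_ge1; split; [apply: geom_limit_witnesses | apply: geom_limit_sprec].
Qed.
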